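(* Let $N\ge1$, $H=(H_1,\dots,H_N)\in]0,1[^N$, $a\in\mathbb{R}^N\setminus\{(0,\dots,0)\}$, let $S^H$ be the mixed sub-fractional Brownian motion with parameters $N,a,H$, let $H_{i_0}=\min\{H_i; i\in\{1,\dots,N\},\ a_i\neq0\}$, and let $0<\epsilon<T$, $I=[\epsilon,T]$. There exists a constant $c>0$ such that for all $s,t\in I$, $$\mathrm{Var}\big(S^H(t)\,\big|\,S^H(s)\big)\ge c\,|s-t|^{2H_{i_0}},$$ where $\mathrm{Var}(Y|Z)$ denotes the conditional variance of $Y$ given $Z$.
   Context: Let $(\Omega,\mathcal F,\mathbb P)$ be a probability space. For $K\in]0,1[$, a fractional Brownian motion on $\mathbb{R}$ with Hurst index $K$ is a continuous centered Gaussian process $\{B^K(t),t\in\mathbb{R}\}$ with $\mathrm{Cov}(B^K(t),B^K(s))=\frac12(|t|^{2K}+|s|^{2K}-|t-s|^{2K})$. The sub-fractional Brownian motion (sfBm) of index $K$ is $\xi^K_t=(B^K_t+B^K_{-t})/\sqrt2$, $t\ge0$; it is a continuous centered Gaussian process with $\mathrm{Cov}(\xi^K_t,\xi^K_s)=s^{2K}+t^{2K}-\frac12\big((s+t)^{2K}+|t-s|^{2K}\big)$. For $N\ge1$, $H\in]0,1[^N$, $a\in\mathbb{R}^N\setminus\{0\}$, the mixed sub-fractional Brownian motion (msfBm) is $S^H(t)=\sum_{i=1}^N a_i\xi^{H_i}(t)$, $t\ge0$, where $\xi^{H_1},\dots,\xi^{H_N}$ are independent sfBms with indices $H_1,\dots,H_N$.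 Since $(S^H(t),S^H(s))$ is a centered Gaussian vector, $\mathrm{Var}(S^H(t)|S^H(s))$ is deterministic and equals $\inf_{b\in\mathbb{R}}\mathbb{E}(S^H(t)-bS^H(s))^2$. *)

From HB Require Import structures.
From mathcomp Require Import all_boot all_order all_algebra.
From mathcomp Require Import all_classical all_reals all_analysis.
Set Implicit Arguments. Unset Strict Implicit. Unset Printing Implicit Defensive.
Import Order.TTheory GRing.Theory Num.Theory numFieldNormedType.Exports.
Local Open Scope classical_set_scope.
Local Open Scope ring_scope.

Definition sfBm_cov {R : realType} (K s t : R) : R :=
  s `^ (2 * K) + t `^ (2 * K)
  - 2^-1 * ((s + t) `^ (2 * K) + `|t - s| `^ (2 * K)).

Definition centered_gaussian {d} {T : measurableType d} {R : realType}
  (P : probability T R) (Y : T -> R) : Prop :=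
  measurable_fun setT Y /\
  ((exists s : R, 0 < s /\
      forall A : set R, measurable A -> P (Y @^-1` A) = normal_prob 0 s A)
   \/ (forall A : set R, measurable A -> P (Y @^-1` A) = \d_(0 : R) A)).

(* X : R -> T -> R (only times t >= 0 matter) is a sub-fractional Brownian
   motion of index K: continuous paths on [0, +oo), centered Gaussian process
   (every finite linear combination is centered Gaussian), square integrable,
   with covariance sfBm_cov K. *)
Definition is_sfBm {d} {T : measurableType d} {R : realType}
  (P : probability T R) (K : R) (X : R -> T -> R) : Prop :=
  (forall w, {within [set` `[0%R, +oo[], continuous (X^~ w : R -> R)}) /\
  (forall (n : nat) (ts : 'I_n -> R) (cs : 'I_n -> R),
     (forall k, 0 <= ts k) ->
     centered_gaussian P (fun w => \sum_(k < n) cs k * X (ts k) w)) /\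
  (forall t, 0 <= t -> X t \in Lfun P 2) /\
  (forall s t, 0 <= s -> 0 <= t ->
     covariance P (X s) (X t) = (sfBm_cov K s t)%:E).

Definition indep_processes {d} {T : measurableType d} {R : realType}
  (P : probability T R) (N : nat) (X : 'I_N -> R -> T -> R) : Prop :=
  forall (n : nat) (ts : 'I_N -> 'I_n -> R) (B : 'I_N -> 'I_n -> set R),
    (forall i k, 0 <= ts i k) -> (forall i k, measurable (B i k)) ->
    P (\bigcap_(i in [set: 'I_N]) \bigcap_(k in [set: 'I_n])
         (X i (ts i k) @^-1` B i k))
    = (\prod_(i < N) P (\bigcap_(k in [set: 'I_n]) (X i (ts i k) @^-1` B i k)))%E.

Definition msfBm {T : Type} {R : realType} (N : nat) (a : 'I_N -> R)
  (xi : 'I_N -> R -> T -> R) (t : R) : T -> R :=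
  fun w => \sum_(i < N) a i * xi i t w.

(* Conditional variance Var(Y | Z) of a centered Gaussian vector (Y, Z):
   inf_{b in R} E (Y - b Z)^2  (an extended real). *)
Definition cond_var {d} {T : measurableType d} {R : realType}
  (P : probability T R) (Y Z : T -> R) : \bar R :=
  ereal_inf [set ('E_P[(fun w => (Y w - b * Z w) ^+ 2)%R])%E | b in [set: R]].

From HB Require Import structures.
From mathcomp Require Import all_boot all_order all_algebra.
From mathcomp Require Import all_classical all_reals all_analysis.
From mathcomp Require Import measurable_realfun ring lra.
Import Order.TTheory GRing.Theory Num.Theory numFieldNormedType.Exports.
Local Open Scope classical_set_scope.
Local Open Scope ring_scope.

(* By independence the cross covariances vanish, so E (S(t) - b S(s))^2 is at
   least a_{i0}^2 Var (xi(t) - b xi(s)) for the sfBm xi of index K = H_{i0}, and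
   minimising this quadratic in b leaves det G(s,t) / G(s,s), where G is the sfBm
   covariance.  By self-similarity det G(s,t) = s^{4K} D(t/s) with
   D(x) = det G(1,x).  Near x = 1 an explicit expansion gives
   D(x) >= Var xi(1) / 4 * (x - 1)^{2K}; away from 1, D is continuous and
   positive, hence bounded below on compacts.  Positivity: if D(x) = 0 then xi(x)
   is a multiple of xi(1), which by scaling forces D(x^-n) = 0 for all n,
   contradicting D(r) ~ Var xi(1)^2 r^{2K} as r -> 0. *)

Section powR_facts.
Context {R : realType}.
Implicit Types (a b c h r : R).

Lemma ler_powR_base r a b : 0 <= r -> 0 <= a -> a <= b -> a `^ r <= b `^ r.
Proof.
by move=> r0 a0 ab; apply: ge0_ler_powR; rewrite ?nnegrE // (le_trans a0).
Qed.

Lemma powRVK c h : 0 <= c -> 0 < h -> (c `^ h^-1) `^ h = c.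
Proof. by move=> c0 h0; rewrite -powRrM mulVf ?gt_eqF // powRr1. Qed.

Lemma sqr_powR_split a h : 0 <= a -> a ^+ 2 = a `^ h * a `^ (2 - h).
Proof.
move=> a0; rewrite -powR_mulrn // -powRD; first by rewrite addrC subrK.
by rewrite addrC subrK pnatr_eq0.
Qed.

Lemma powR_le_near0 h c : 0 < h -> 0 < c ->
  exists2 d, 0 < d & forall r, 0 <= r <= d -> r `^ h <= c.
Proof.
move=> h0 c0; exists (c `^ h^-1); first exact: powR_gt0.
move=> r /andP[r0 rd]; rewrite -[leRHS](powRVK c h (ltW c0) h0).
exact: ler_powR_base (ltW h0) r0 rd.
Qed.

Lemma powR1_bounds a r : 1 <= a -> 0 <= r <= 1 -> 1 <= a `^ r <= a.
Proof.
move=> a1 /andP[r0 r1]; apply/andP; split.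
  by rewrite -(powRr0 a) ler_powR.
by rewrite -{2}(powRr1 (le_trans ler01 a1)) ler_powR.
Qed.

Lemma powR_continuous h (z : R) : 0 < z -> {for z, continuous (fun t : R => t `^ h)}.
Proof.
move=> z0; apply: differentiable_continuous; apply/derivable1_diffP.
by apply: derivable_powR; rewrite in_itv /= z0.
Qed.

End powR_facts.

Section psd_kernel.
Context {R : realType}.
Variable k : R -> R -> R.

Definition psd3 := forall u1 u2 u3 c1 c2 c3 : R, 0 <= u1 -> 0 <= u2 -> 0 <= u3 ->
  0 <= c1 ^+ 2 * k u1 u1 + c2 ^+ 2 * k u2 u2 + c3 ^+ 2 * k u3 u3
       + 2 * c1 * c2 * k u1 u2 + 2 * c1 * c3 * k u1 u3 + 2 * c2 * c3 * k u2 u3.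

Definition gram_det u v := k u u * k v v - k u v ^+ 2.

Hypothesis kC : forall u v, k u v = k v u.
Hypothesis k_psd3 : psd3.

Lemma gram_det_ge0 u v : 0 <= u -> 0 <= v -> 0 < k u u -> 0 <= gram_det u v.
Proof.
move=> u0 v0 kuu; rewrite -(pmulr_rge0 _ kuu).
apply: le_trans (k_psd3 u v 0 (k u v) (- k u u) 0 u0 v0 (lexx 0)) _.
by rewrite /gram_det le_eqVlt; apply/orP; left; apply/eqP; ring.
Qed.

Lemma gram_det_eq0_cov u v r : 0 <= u -> 0 <= v -> 0 <= r -> 0 < k r r ->
  gram_det u v = 0 -> k u u * k v r = k u v * k u r.
Proof.
move=> u0 v0 r0 krr g0; apply/eqP; rewrite -subr_eq0 -sqrf_eq0.
set e := k u u * k v r - k u v * k u r.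
move: (k_psd3 v u r (k u u * k r r) (- (k r r * k u v)) (- e) v0 u0 r0).
set q := (X in 0 <= X) => q0.
have qE : q = k r r ^+ 2 * k u u * gram_det u v - k r r * e ^+ 2.
  by rewrite /q /e /gram_det [k v u]kC; ring.
rewrite qE g0 mulr0 sub0r oppr_ge0 pmulr_rle0 // in q0.
by rewrite eq_le q0 sqr_ge0.
Qed.

Lemma gram_detC u v : gram_det u v = gram_det v u.
Proof. by rewrite /gram_det mulrC kC. Qed.

Lemma gram_det_le_mul_quad u v b :
  gram_det u v <= k u u * (k v v - 2 * b * k v u + b ^+ 2 * k u u).
Proof.
have -> : k u u * (k v v - 2 * b * k v u + b ^+ 2 * k u u)
    = (b * k u u - k u v) ^+ 2 + gram_det u v by rewrite /gram_det kC; ring.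
by rewrite lerDr sqr_ge0.
Qed.

End psd_kernel.

Section sfBm_covariance.
Context {R : realType}.
Implicit Types (K u v x l : R).

Lemma sfBm_covC K u v : sfBm_cov K u v = sfBm_cov K v u.
Proof. by rewrite /sfBm_cov [u + v]addrC distrC [u `^ _ + _]addrC. Qed.

Lemma sfBm_cov_scale K l u v : 0 < l -> 0 <= u -> 0 <= v ->
  sfBm_cov K (l * u) (l * v) = l `^ (2 * K) * sfBm_cov K u v.
Proof.
move=> l0 u0 v0.
rewrite /sfBm_cov -mulrDr -mulrBr normrM gtr0_norm //.
rewrite !powRM ?(ltW l0) ?addr_ge0 //.
set a := l `^ _; set b := u `^ _; set c := v `^ _; set d := (u + v) `^ _.
set e := `|v - u| `^ _; ring.
Qed.

Definition sfBm_var1 K : R := 2 - 2^-1 * 2 `^ (2 * K).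

Lemma sfBm_cov_diag K u : 0 < K -> 0 <= u -> sfBm_cov K u u = u `^ (2 * K) * sfBm_var1 K.
Proof.
move=> K0 u0.
rewrite /sfBm_cov /sfBm_var1 subrr normr0 powR0; last by rewrite mulf_neq0 // gt_eqF.
have -> : u + u = 2 * u by ring.
rewrite powRM //.
set a := u `^ _; set b := 2 `^ _; ring.
Qed.

Lemma sfBm_cov11 K : 0 < K -> sfBm_cov K 1 1 = sfBm_var1 K.
Proof. by move=> K0; rewrite sfBm_cov_diag // powR1 mul1r. Qed.

Lemma sfBm_var1_gt0 K : 0 < K < 1 -> 0 < sfBm_var1 K.
Proof.
move=> /andP[K0 K1]; rewrite /sfBm_var1 subr_gt0 ltr_pdivrMl // -natrM.
have -> : (2 * 2)%N%:R = (2 : R) `^ 2%:R by rewrite powR_mulrn // -natrX.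
by rewrite /powR !gt_eqF // ltr_expR ltr_pM2r ?ln_gt0 ?ltr1n // -[ltRHS]mulr1 ltr_pM2l.
Qed.

Lemma sfBm_gram_det_scale K l u v : 0 < l -> 0 <= u -> 0 <= v ->
  gram_det (sfBm_cov K) (l * u) (l * v) = (l `^ (2 * K)) ^+ 2 * gram_det (sfBm_cov K) u v.
Proof.
move=> l0 u0 v0; rewrite /gram_det !sfBm_cov_scale //.
set a := l `^ _; set b := sfBm_cov K u u; set c := sfBm_cov K v v.
set e := sfBm_cov K u v; ring.
Qed.

Lemma sfBm_gram_det1E K x : 0 < K -> 0 <= x ->
  gram_det (sfBm_cov K) 1 x = sfBm_var1 K ^+ 2 * x `^ (2 * K) - sfBm_cov K 1 x ^+ 2.
Proof.
move=> K0 x0; rewrite /gram_det sfBm_cov11 // sfBm_cov_diag //.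
by congr (_ - _); rewrite expr2; ring.
Qed.

End sfBm_covariance.

Section sfBm_gram_det.
Context {R : realType}.
Variable K : R.
Hypothesis K01 : 0 < K < 1.

Local Notation V := (sfBm_var1 K).

Lemma two_powR_le_midpoint x : 0 <= x -> 2 `^ (2 * K) * x `^ K <= (1 + x) `^ (2 * K).
Proof.
move=> x0; have /andP[K0 _] := K01.
rewrite !powRrM !powR_mulrn ?ler0n ?addr_ge0 // -powRM ?sqr_ge0 //.
apply: ler_powR_base; rewrite ?(ltW K0) ?mulr_ge0 ?sqr_ge0 // -subr_ge0.
have -> : (1 + x) ^+ 2 - 2 ^+ 2 * x = (x - 1) ^+ 2 by ring.
exact: sqr_ge0.
Qed.

Lemma midpoint_powR_sub_le x : 1 <= x ->
  (1 + x) `^ (2 * K) - 2 `^ (2 * K) <= (x - 1) * (x + 3).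
Proof.
move=> x1; have /andP[K0 K1] := K01.
have K22 : 2 * K <= 2 by lra.
set b := (1 + x) / 2.
have b1 : 1 <= b by rewrite /b ler_pdivlMr //; lra.
have -> : 1 + x = 2 * b by rewrite /b mulrC divfK // pnatr_eq0.
rewrite powRM ?ler0n ?(le_trans ler01 b1) //.
have bK1 : 1 <= b `^ (2 * K).
  by rewrite -[X in X <= _](powRr0 b) ler_powR //; lra.
have bK2 : b `^ (2 * K) <= b ^+ 2.
  by rewrite -powR_mulrn ?(le_trans ler01 b1) // ler_powR.
have B4 : (2 : R) `^ (2 * K) <= 2 ^+ 2.
  by rewrite -powR_mulrn ?ler0n // ler_powR ?ler1n.
have -> : (x - 1) * (x + 3) = 2 ^+ 2 * (b ^+ 2 - 1) by rewrite /b; field.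
set B := 2 `^ _; have -> : B * b `^ (2 * K) - B = B * (b `^ (2 * K) - 1) by ring.
apply: le_trans (_ : 2 ^+ 2 * (b `^ (2 * K) - 1) <= _).
  by apply: ler_wpM2r => //; rewrite subr_ge0.
by apply: ler_wpM2l; rewrite ?lerD2r.
Qed.

Lemma sfBm_gram_det_near1 x : 1 <= x -> x - 1 <= 1 -> 5 * (x - 1) <= V ->
  (x - 1) `^ (2 * K) <= V -> (x - 1) `^ (2 - 2 * K) <= 4^-1 ->
  V / 4 * (x - 1) `^ (2 * K) <= gram_det (sfBm_cov K) 1 x.
Proof.
move=> x1 u1 u5 uw uq; have /andP[K0 K1] := K01; have V0 := sfBm_var1_gt0 K K01.
have x0 : 0 <= x by lra.
have u0 : 0 <= x - 1 by lra.
have /andP[y1 yx] : 1 <= x `^ K <= x by apply: powR1_bounds => //; lra.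
have Alo := two_powR_le_midpoint x x0.
have Aup := midpoint_powR_sub_le x x1.
have usplit := sqr_powR_split (x - 1) (2 * K) u0.
have w0 := powR_ge0 (x - 1) (2 * K).
have q0 := powR_ge0 (x - 1) (2 - 2 * K).
have B0 := powR_ge0 2 (2 * K).
rewrite sfBm_gram_det1E // /sfBm_cov powR1 ger0_norm //.
have -> : x `^ (2 * K) = x `^ K ^+ 2 by rewrite mulrC powRrM powR_mulrn ?powR_ge0.
have VE : V = 2 - 2^-1 * 2 `^ (2 * K) by [].
move: VE Alo Aup usplit w0 q0 B0 uw uq y1 yx.
set y := x `^ K; set A := (1 + x) `^ _; set B := 2 `^ _; set w := (x - 1) `^ _.
set q := (x - 1) `^ (2 - _); set u := x - 1.
move=> VE Alo Aup usplit w0 q0 B0 uw uq y1 yx.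
set F := V * y - (1 + y ^+ 2 - 2^-1 * (A + w)).
have FE : F = 2^-1 * w + 2^-1 * (A - B * y) - (y - 1) ^+ 2 by rewrite /F VE; ring.
have Flo : w / 4 <= F.
  have : (y - 1) ^+ 2 <= u ^+ 2 by rewrite /u; nra.
  by rewrite usplit FE; nra.
have Fhi : F <= V.
  have : B <= B * y by nra.
  by rewrite FE; rewrite /u in Aup; nra.
have -> : V ^+ 2 * y ^+ 2 - (1 + y ^+ 2 - 2^-1 * (A + w)) ^+ 2 = F * (2 * V * y - F).
  by rewrite /F; ring.
have -> : V / 4 * w = w / 4 * V by ring.
by apply: ler_pM; rewrite ?divr_ge0 ?(ltW V0) //; nra.
Qed.

Lemma sfBm_cov1_small r : 0 < r < 1 ->
  sfBm_cov K 1 r ^+ 2 <= (r `^ (2 * K) + 2 * r) ^+ 2.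
Proof.
move=> /andP[r0 r1]; have /andP[K0 K1] := K01.
rewrite /sfBm_cov powR1 distrC ger0_norm ?subr_ge0 ?(ltW r1) //.
have /andP[a1 a2] : 1 <= (1 + r) `^ (2 * K) <= (1 + r) ^+ 2.
  by rewrite -[X in X <= _ <= _](powRr0 (1 + r)) -powR_mulrn ?ler_powR //; lra.
have /andP[b1 b2] : (1 - r) ^+ 2 <= (1 - r) `^ (2 * K) <= 1.
  rewrite -[X in _ <= _ <= X](powRr0 (1 - r)) -powR_mulrn; last lra.
  by rewrite !ger_powR //; lra.
have c0 := powR_ge0 r (2 * K).
move: a1 a2 b1 b2 c0; set p := r `^ _; set a := (1 + r) `^ _; set b := (1 - r) `^ _.
move=> a1 a2 b1 b2 c0.
have h1 : - (p + 2 * r) <= 1 + p - 2^-1 * (a + b) by nra.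
have h2 : 1 + p - 2^-1 * (a + b) <= p + 2 * r by nra.
nra.
Qed.

Lemma sfBm_gram_det_gt0_near0 :
  exists2 r0, 0 < r0 & forall r, 0 < r <= r0 -> 0 < gram_det (sfBm_cov K) 1 r.
Proof.
have /andP[K0 K1] := K01; have V0 := sfBm_var1_gt0 K K01.
have V2 : 0 < V ^+ 2 by rewrite exprn_gt0.
have [d1 d1_gt0 hd1] : exists2 d, 0 < d &
    forall r, 0 <= r <= d -> r `^ (2 * K) <= V ^+ 2 / 8.
  by apply: powR_le_near0; [lra | rewrite divr_gt0].
have [d2 d2_gt0 hd2] : exists2 d, 0 < d &
    forall r, 0 <= r <= d -> r `^ (2 - 2 * K) <= V ^+ 2 / 32.
  by apply: powR_le_near0; [lra | rewrite divr_gt0].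
exists (Num.min (Num.min d1 d2) 2^-1); first by rewrite !lt_min d1_gt0 d2_gt0 invr_gt0 ltr0n.
move=> r /andP[r0]; rewrite !le_min => /andP[/andP[rd1 rd2] r2].
have r01 : 0 < r < 1.
  by rewrite r0 (le_lt_trans r2) // invf_lt1 ?ltr1n.
rewrite sfBm_gram_det1E ?(ltW r0) // subr_gt0.
apply: le_lt_trans (sfBm_cov1_small r r01) _.
have p_le : r `^ (2 * K) <= V ^+ 2 / 8 by apply: hd1; rewrite (ltW r0).
have q_le : r `^ (2 - 2 * K) <= V ^+ 2 / 32 by apply: hd2; rewrite (ltW r0).
have rsplit := sqr_powR_split r (2 * K) (ltW r0).
have p0 : 0 < r `^ (2 * K) by apply: powR_gt0.
have q0 := powR_ge0 r (2 - 2 * K).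
move: p_le q_le rsplit p0 q0.
set p := r `^ (2 * K); set q := r `^ (2 - _) => p_le q_le rsplit p0 q0.
have : (p + 2 * r) ^+ 2 <= 2 * p ^+ 2 + 8 * (p * q).
  by rewrite -rsplit; have := sqr_ge0 (p - 2 * r); nra.
nra.
Qed.

Lemma sfBm_gram_det_eq0_shrink x r : psd3 (sfBm_cov K) -> 0 < x -> 0 < r ->
  gram_det (sfBm_cov K) 1 x = 0 -> gram_det (sfBm_cov K) 1 (x * r) = 0 ->
  gram_det (sfBm_cov K) 1 r = 0.
Proof.
move=> psd x0 r0 gx gxr; have /andP[K0 _] := K01; have V0 := sfBm_var1_gt0 K K01.
have xr0 : 0 < x * r by rewrite mulr_gt0.
have xr_var : 0 < sfBm_cov K (x * r) (x * r).
  by rewrite sfBm_cov_diag ?(ltW xr0) // mulr_gt0 ?powR_gt0.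
have key := gram_det_eq0_cov _ (sfBm_covC K) psd 1 x (x * r) ler01 (ltW x0) (ltW xr0) xr_var gx.
rewrite sfBm_cov11 // -[x in sfBm_cov K x]mulr1 sfBm_cov_scale ?(ltW r0) // in key.
move: gx gxr; rewrite !sfBm_gram_det1E ?(ltW x0) ?(ltW xr0) ?(ltW r0) //.
rewrite powRM ?(ltW x0) ?(ltW r0) //.
move=> /eqP; rewrite subr_eq0 => /eqP gx /eqP; rewrite subr_eq0 => /eqP gxr.
have x2K : 0 < x `^ (2 * K) by apply: powR_gt0.
have nz : (V * x `^ (2 * K)) ^+ 2 != 0 by rewrite sqrf_eq0 mulf_neq0 ?gt_eqF.
apply: (mulfI nz); rewrite mulr0; move: key gx gxr.
set g := sfBm_cov K 1 x; set a := sfBm_cov K 1 r; set b := sfBm_cov K 1 (x * r).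
set xh := x `^ _; set rh := r `^ _ => key gx gxr.
have -> : (V * xh) ^+ 2 * (V ^+ 2 * rh - a ^+ 2)
    = V ^+ 2 * xh * (V ^+ 2 * (xh * rh)) - (V * (xh * a)) ^+ 2 by ring.
by rewrite key exprMn -gx -gxr subrr.
Qed.

Lemma sfBm_gram_det_gt0 x : psd3 (sfBm_cov K) -> 1 < x ->
  0 < gram_det (sfBm_cov K) 1 x.
Proof.
move=> psd x1; have /andP[K0 _] := K01; have V0 := sfBm_var1_gt0 K K01.
have x0 : 0 < x by apply: lt_trans x1.
have var1 : 0 < sfBm_cov K 1 1 by rewrite sfBm_cov11.
rewrite lt_def (gram_det_ge0 _ psd 1 x ler01 (ltW x0) var1) andbT.
apply/eqP => gx; set y := x^-1.
have y0 : 0 < y by rewrite invr_gt0.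
have gyn n : gram_det (sfBm_cov K) 1 (y ^+ n) = 0.
  elim: n => [|n IH]; first by rewrite expr0 /gram_det expr2 subrr.
  apply: (sfBm_gram_det_eq0_shrink x (y ^+ n.+1)) => //; first exact: exprn_gt0.
  by rewrite exprS mulrA mulfV ?gt_eqF // mul1r.
have [r0 r0_gt0 near0] := sfBm_gram_det_gt0_near0.
have y1 : `|y| < 1 by rewrite gtr0_norm // invf_lt1.
have [N _ yN] := cvgr0_norm_lt _ (cvg_expr y1) _ r0_gt0.
have yNr0 : y ^+ N <= r0.
  by apply: ltW; rewrite -[y ^+ N]gtr0_norm ?exprn_gt0 //; apply: yN => /=.
by have := near0 (y ^+ N); rewrite gyn ltxx exprn_gt0 // yNr0 => /(_ isT).
Qed.

Lemma sfBm_cov1_continuous x : 1 < x -> {for x, continuous (sfBm_cov K 1)}.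
Proof.
move=> x1; have x0 : 0 < x by apply: lt_trans x1.
have pow_cont (g : R -> R) h : 0 < g x -> {for x, continuous g} ->
    {for x, continuous (fun t => g t `^ h)}.
  move=> gx0 cg; have -> : (fun t => g t `^ h) = (fun a => a `^ h) \o g by [].
  by apply: continuous_comp => //; exact: powR_continuous.
rewrite /sfBm_cov; apply: continuousB; first apply: continuousD.
- exact: cvg_cst.
- exact: pow_cont (fun t => t) _ x0 cvg_id.
apply: continuousM; first exact: cvg_cst.
apply: continuousD.
- apply: (pow_cont (fun t => 1 + t)); first by rewrite addr_gt0.
  by apply: continuousD; [exact: cvg_cst | exact: cvg_id].
- apply: (pow_cont (fun t => `|t - 1|)); first by rewrite normr_gt0 subr_eq0 gt_eqF.
  have -> : (fun t => `|t - 1|) = (fun y : R => `|y|) \o (fun t => t - 1) by [].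
  apply: continuous_comp; last exact: norm_continuous.
  by apply: continuousB; [exact: cvg_id | exact: cvg_cst].
Qed.

Lemma sfBm_gram_det_far1 d M : psd3 (sfBm_cov K) -> 0 < d ->
  exists2 m, 0 < m & forall x, 1 + d <= x <= M -> m <= gram_det (sfBm_cov K) 1 x.
Proof.
move=> psd d0; have /andP[K0 _] := K01.
have [dM|Md] := lerP (1 + d) M; last by exists 1 => // x /andP[]; lra.
pose g x := sfBm_var1 K ^+ 2 * x `^ (2 * K) - sfBm_cov K 1 x ^+ 2.
have gE x : 1 + d <= x -> gram_det (sfBm_cov K) 1 x = g x.
  by move=> dx; rewrite sfBm_gram_det1E //; lra.
have g_cont : {within `[1 + d, M], continuous g}.
  apply: continuous_in_subspaceT => x; rewrite inE /= in_itv /= => /andP[dx _].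
  have x1 : 1 < x by lra.
  have -> : g = (fun=> V ^+ 2) \* (fun t => t `^ (2 * K))
      - sfBm_cov K 1 \* sfBm_cov K 1 by apply/funext => t; rewrite /g /= expr2.
  apply: continuousB; apply: continuousM.
  - exact: cvg_cst.
  - by apply: powR_continuous; lra.
  - exact: sfBm_cov1_continuous.
  - exact: sfBm_cov1_continuous.
have [c /[!in_itv]/= /andP[dc cM] cmin] := EVT_min dM g_cont.
exists (g c); first by rewrite -gE // sfBm_gram_det_gt0 //; lra.
by move=> x /andP[dx xM]; rewrite gE //; apply: cmin; rewrite in_itv /= dx xM.
Qed.

Lemma sfBm_gram_det1_lower M : psd3 (sfBm_cov K) -> 1 <= M ->
  exists2 c, 0 < c & forall x, 1 <= x <= M ->
    c * (x - 1) `^ (2 * K) <= gram_det (sfBm_cov K) 1 x.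
Proof.
move=> psd M1; have /andP[K0 K1] := K01; have V0 := sfBm_var1_gt0 K K01.
have [d1 d1_gt0 hd1] : exists2 d, 0 < d & forall u, 0 <= u <= d -> u `^ (2 * K) <= V.
  by apply: powR_le_near0; lra.
have [d2 d2_gt0 hd2] : exists2 d, 0 < d &
    forall u, 0 <= u <= d -> u `^ (2 - 2 * K) <= 4^-1.
  by apply: powR_le_near0; rewrite ?invr_gt0 //; lra.
set d := Num.min (Num.min 1 (V / 5)) (Num.min d1 d2).
have d0 : 0 < d by rewrite !lt_min ltr01 d1_gt0 d2_gt0 divr_gt0.
have [m m0 far] := sfBm_gram_det_far1 d M psd d0.
have M0 : 0 < (1 + M) `^ (2 * K) by apply: powR_gt0; lra.
exists (Num.min (V / 4) (m / (1 + M) `^ (2 * K))); first by rewrite lt_min !divr_gt0.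
move=> x /andP[x1 xM]; have w0 := powR_ge0 (x - 1) (2 * K).
have [xd|dx] := lerP (x - 1) d.
  have xd1 : x - 1 <= d1 by apply: le_trans xd _; rewrite /d !ge_min lexx !orbT.
  have xd2 : x - 1 <= d2 by apply: le_trans xd _; rewrite /d !ge_min lexx !orbT.
  have xd5 : d <= V / 5 by rewrite /d !ge_min lexx orbT.
  rewrite ler_pdivlMr // in xd5.
  apply: le_trans (sfBm_gram_det_near1 _ x1 _ _ (hd1 _ _) (hd2 _ _)).
  - by rewrite ler_wpM2r // ge_min lexx.
  - by apply: le_trans xd _; rewrite /d !ge_min lexx.
  - lra.
  - by rewrite subr_ge0 x1.
  - by rewrite subr_ge0 x1.
apply: le_trans (far x _); last by rewrite xM andbT; lra.
apply: le_trans (_ : m / (1 + M) `^ (2 * K) * (x - 1) `^ (2 * K) <= m).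
  by rewrite ler_wpM2r // ge_min lexx orbT.
rewrite mulrAC ler_pdivrMr // ler_wpM2l ?(ltW m0) //.
by apply: ler_powR_base; lra.
Qed.

End sfBm_gram_det.

Section sfBm_increment_variance.
Context {R : realType}.
Variables (K eps T : R).
Hypotheses (K01 : 0 < K < 1) (psd : psd3 (sfBm_cov K)) (eps0 : 0 < eps).

Lemma sfBm_gram_det_lower :
  exists2 c, 0 < c & forall s t, s \in `[eps, T] -> t \in `[eps, T] ->
    c * `|s - t| `^ (2 * K) <= gram_det (sfBm_cov K) s t.
Proof.
have /andP[K0 _] := K01.
have [epsT|Teps] := lerP eps T; last first.
  exists 1 => // s t; rewrite in_itv /= => /andP[es sT].
  by have := lt_le_trans (lt_le_trans Teps es) sT; rewrite ltxx.
have M1 : 1 <= T / eps by rewrite ler_pdivlMr // mul1r.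
have [c1 c1_gt0 lower] := sfBm_gram_det1_lower K K01 (T / eps) psd M1.
exists (eps `^ (2 * K) * c1); first by rewrite mulr_gt0 ?powR_gt0.
move=> s t; wlog st : s t / s <= t => [wlog_st|].
  case/orP: (le_total s t) => [st|ts hs ht]; first exact: wlog_st.
  by rewrite distrC gram_detC ?wlog_st //; exact: sfBm_covC.
rewrite !in_itv /= => /andP[es sT] /andP[et tT].
have s0 : 0 < s by apply: lt_le_trans es.
set x := t / s.
have tE : t = s * x by rewrite /x mulrC divfK ?gt_eqF.
have x1 : 1 <= x by rewrite /x ler_pdivlMr // mul1r.
have xM : x <= T / eps.
  rewrite /x ler_pdivrMr // mulrAC ler_pdivlMr // ler_pM //.
  - exact: le_trans (ltW eps0) et.
  - exact: ltW.
have lx := lower x (introT andP (conj x1 xM)).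
have stE : `|s - t| = s * (x - 1) by rewrite distrC ger0_norm ?subr_ge0 // tE mulrBr mulr1.
rewrite stE tE -[s in gram_det _ s]mulr1 sfBm_gram_det_scale ?(le_trans ler01 x1) //.
rewrite powRM ?(ltW s0) ?subr_ge0 //.
have es2K : eps `^ (2 * K) <= s `^ (2 * K).
  by apply: ler_powR_base => //; [lra | exact: ltW].
have s2K0 := powR_ge0 s (2 * K); have w0 := powR_ge0 (x - 1) (2 * K).
move: es2K s2K0 w0 lx; set e := eps `^ _; set a := s `^ _; set w := (x - 1) `^ _.
move=> es2K s2K0 w0 lx.
have -> : e * c1 * (a * w) = e * a * (c1 * w) by ring.
rewrite expr2 ler_pM ?mulr_ge0 ?(ltW c1_gt0) ?powR_ge0 //.
by rewrite ler_wpM2r.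
Qed.

Lemma sfBm_incr_var_lower :
  exists2 c, 0 < c & forall s t b, s \in `[eps, T] -> t \in `[eps, T] ->
    c * `|s - t| `^ (2 * K) <=
      sfBm_cov K t t - 2 * b * sfBm_cov K t s + b ^+ 2 * sfBm_cov K s s.
Proof.
have /andP[K0 _] := K01; have V0 := sfBm_var1_gt0 K K01.
have [c0 c0_gt0 lower] := sfBm_gram_det_lower.
have [epsT|Teps] := lerP eps T; last first.
  exists 1 => // s t b; rewrite in_itv /= => /andP[es sT].
  by have := lt_le_trans (lt_le_trans Teps es) sT; rewrite ltxx.
have T0 : 0 < T `^ (2 * K) * sfBm_var1 K.
  by rewrite mulr_gt0 ?powR_gt0 // (lt_le_trans eps0 epsT).
exists (c0 / (T `^ (2 * K) * sfBm_var1 K)); first by rewrite divr_gt0.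
move=> s t b hs ht; have := lower s t hs ht.
have := gram_det_le_mul_quad _ (sfBm_covC K) s t b.
move: hs; rewrite in_itv /= => /andP[es sT].
have s0 : 0 < s := lt_le_trans eps0 es.
have A_le : sfBm_cov K s s <= T `^ (2 * K) * sfBm_var1 K.
  by rewrite sfBm_cov_diag ?ler_wpM2r ?(ltW V0) ?ler_powR_base ?(ltW s0) //; lra.
have A0 : 0 < sfBm_cov K s s by rewrite sfBm_cov_diag ?mulr_gt0 ?powR_gt0 ?(ltW s0).
have w0 : 0 <= c0 * `|s - t| `^ (2 * K) by rewrite mulr_ge0 ?powR_ge0 ?(ltW c0_gt0).
move: A_le A0 w0; set A := sfBm_cov K s s; set Q := _ - _ + _; set w := c0 * _.
move=> A_le A0 w0 AQ wg.
have Q0 : 0 <= Q by rewrite -(pmulr_rge0 _ A0) (le_trans w0) // (le_trans wg).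
rewrite mulrAC ler_pdivrMr // (le_trans (le_trans wg AQ)) // mulrC.
exact: ler_wpM2l.
Qed.

End sfBm_increment_variance.

Section real_covariance.
Context {d} {T : measurableType d} {R : realType} (P : probability T R).

Definition rcov (X Y : T -> R) : R := fine (covariance P X Y).

Lemma Lfun2_Lfun1 {X : T -> R} : X \in Lfun P 2%:E -> X \in Lfun P 1.
Proof. by apply: Lfun_subset12; exact: fin_num_measure. Qed.

Lemma Lfun2D {X Y : T -> R} : X \in Lfun P 2%:E -> Y \in Lfun P 2%:E ->
  X \+ Y \in Lfun P 2%:E.
Proof. by move=> X2 Y2; rewrite rpredD ?lee1n. Qed.

Lemma rcovE (X Y : T -> R) : X \in Lfun P 2%:E -> Y \in Lfun P 2%:E ->
  covariance P X Y = (rcov X Y)%:E.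
Proof.
move=> X2 Y2; rewrite /rcov fineK //.
by apply: covariance_fin_num;
  [exact: Lfun2_Lfun1 | exact: Lfun2_Lfun1 | exact: Lfun2_mul_Lfun1].
Qed.

Lemma rcovC (X Y : T -> R) : rcov X Y = rcov Y X.
Proof. by rewrite /rcov covarianceC. Qed.

Lemma rcovDl (X Y Z : T -> R) : X \in Lfun P 2%:E -> Y \in Lfun P 2%:E ->
  Z \in Lfun P 2%:E -> rcov (X \+ Y) Z = rcov X Z + rcov Y Z.
Proof.
move=> X2 Y2 Z2; apply: EFin_inj.
by rewrite EFinD -!rcovE ?rpredD ?lee1n // covarianceDl.
Qed.

Lemma rcovDr (X Y Z : T -> R) : X \in Lfun P 2%:E -> Y \in Lfun P 2%:E ->
  Z \in Lfun P 2%:E -> rcov X (Y \+ Z) = rcov X Y + rcov X Z.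
Proof. by move=> X2 Y2 Z2; rewrite rcovC rcovDl // !(rcovC X). Qed.

Lemma rcovZl (X Y : T -> R) a : X \in Lfun P 2%:E -> Y \in Lfun P 2%:E ->
  rcov (a \o* X) Y = a * rcov X Y.
Proof.
move=> X2 Y2; apply: EFin_inj.
rewrite EFinM -!rcovE ?Lfun_scale ?ler1n // covarianceZl //;
  [exact: Lfun2_Lfun1 | exact: Lfun2_Lfun1 | exact: Lfun2_mul_Lfun1].
Qed.

Lemma rcovZr (X Y : T -> R) a : X \in Lfun P 2%:E -> Y \in Lfun P 2%:E ->
  rcov X (a \o* Y) = a * rcov X Y.
Proof. by move=> X2 Y2; rewrite rcovC rcovZl // rcovC. Qed.

Lemma rcov_ge0 (X : T -> R) : 0 <= rcov X X.
Proof. exact/fine_ge0/variance_ge0. Qed.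

Lemma rcov_sumr (I : Type) (r : seq I) (p : pred I) (F : I -> T -> R) (X : T -> R) :
  X \in Lfun P 2%:E -> (forall i, F i \in Lfun P 2%:E) ->
  rcov X (\sum_(i <- r | p i) F i) = \sum_(i <- r | p i) rcov X (F i).
Proof.
move=> X2 F2; elim: r => [|i r IH].
  by rewrite !big_nil /rcov (_ : 0 = cst 0) // covariance_cst_r.
rewrite !big_cons; case: (p i) => //.
by rewrite -IH rcovDr ?rpred_sum ?lee1n.
Qed.

Lemma rcovDZ (X1 X2 X3 X4 : T -> R) b :
  X1 \in Lfun P 2%:E -> X2 \in Lfun P 2%:E -> X3 \in Lfun P 2%:E -> X4 \in Lfun P 2%:E ->
  rcov (X1 \+ (- b) \o* X2) (X3 \+ (- b) \o* X4)
  = rcov X1 X3 - b * rcov X1 X4 - b * rcov X2 X3 + b ^+ 2 * rcov X2 X4.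
Proof.
move=> X12 X22 X32 X42.
have bX2 := Lfun_scale (- b) (ler1n R 2) X22.
have bX4 := Lfun_scale (- b) (ler1n R 2) X42.
rewrite rcovDl ?rpredD ?lee1n // !rcovDr // !rcovZl // !rcovZr //.
set a1 := rcov X1 X3; set a2 := rcov X1 X4; set a3 := rcov X2 X3; set a4 := rcov X2 X4.
ring.
Qed.

Lemma rcov_sum_uncorrelated_ge {I : finType} {F : I -> T -> R} {i0 : I} :
  (forall i, F i \in Lfun P 2%:E) -> (forall i, i != i0 -> rcov (F i0) (F i) = 0) ->
  rcov (F i0) (F i0) <= rcov (\sum_i F i) (\sum_i F i).
Proof.
move=> F2 uncor; set Z := \sum_(i | i != i0) F i.
have Z2 : Z \in Lfun P 2%:E by rewrite rpred_sum ?lee1n.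
have F0Z : rcov (F i0) Z = 0 by rewrite rcov_sumr // big1.
rewrite (bigD1 i0) //= -/Z rcovDl ?rpredD ?lee1n // !rcovDr // F0Z rcovC F0Z.
by rewrite !add0r addr0 lerDl rcov_ge0.
Qed.

Lemma rcov_le_expectation_sqr {W : T -> R} : W \in Lfun P 2%:E ->
  ((rcov W W)%:E <= 'E_P[(fun w => W w ^+ 2)%R])%E.
Proof.
move=> W2; have := varianceE W2; rewrite /variance rcovE // => varW.
have f1 : ('E_P[W ^+ 2])%E \is a fin_num.
  by apply: expectation_fin_num; rewrite expr2; exact: Lfun2_mul_Lfun1.
have f2 : ('E_P[W])%E \is a fin_num by apply/expectation_fin_num/Lfun2_Lfun1.
have -> : rcov W W = fine 'E_P[W ^+ 2] - fine 'E_P[W] ^+ 2.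
  by apply: EFin_inj; rewrite varW EFinB EFin_expe !fineK.
by rewrite -exprfctE -(fineK f1) lee_fin lerBlDr lerDl sqr_ge0.
Qed.

Lemma integral_prod_mul (mu nu : probability R R) :
  mu.-integrable setT EFin -> nu.-integrable setT EFin ->
  (mu \x nu)%E.-integrable setT (fun z : R * R => (z.1 * z.2)%:E) ->
  (\int[mu \x nu]_z (z.1 * z.2)%:E = \int[mu]_x x%:E * \int[nu]_y y%:E)%E.
Proof.
move=> imu inu iprod; have fnu := integrable_fin_num measurableT inu.
rewrite -integral12_prod_meas1 // /fubini_F.
under eq_integral => x _.
  under eq_integral => y _ do rewrite /= EFinM.
  rewrite integralZl // -(fineK fnu) -EFinM.
  over.
under eq_integral => x _ do rewrite /= EFinM.
by rewrite integralZr // fineK.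
Qed.

Lemma expectationM_indep (U V : T -> R) : U \in Lfun P 2%:E -> V \in Lfun P 2%:E ->
  (forall A B : set R, measurable A -> measurable B ->
     P (U @^-1` A `&` V @^-1` B) = (P (U @^-1` A) * P (V @^-1` B))%E) ->
  ('E_P[U * V] = 'E_P[U] * 'E_P[V])%E.
Proof.
move=> U2 V2 indep.
have U1 := Lfun2_Lfun1 U2; have V1 := Lfun2_Lfun1 V2.
have iU : P.-integrable setT (EFin \o U) := (Lfun1_integrable _ _).1 U1.
have iV : P.-integrable setT (EFin \o V) := (Lfun1_integrable _ _).1 V1.
have mU : measurable_fun setT U by apply/measurable_EFinP; case/integrableP: iU.
have mV : measurable_fun setT V by apply/measurable_EFinP; case/integrableP: iV.
have mUV : measurable_fun setT (fun w => (U w, V w)) := measurable_fun_pair mU mV.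
pose U' : {mfun T >-> R} := HB.pack U (isMeasurableFun.Build _ _ _ _ _ mU).
pose V' : {mfun T >-> R} := HB.pack V (isMeasurableFun.Build _ _ _ _ _ mV).
pose UV : {mfun T >-> (R * R)%type} :=
  HB.pack (fun w => (U w, V w)) (isMeasurableFun.Build _ _ _ _ _ mUV).
pose muU := distribution P U'; pose muV := distribution P V'.
have law_prod X : measurable X -> distribution P UV X = (muU \x muV)%E X.
  by move=> mX; apply/esym/product_measure_unique => // A B mA mB; exact: indep.
pose f (z : R * R) := (z.1 * z.2)%:E.
have mf : measurable_fun setT f.
  by apply/measurable_EFinP/measurable_funM; [exact: measurable_fst | exact: measurable_snd].
have iUV : P.-integrable setT (f \o UV).
  exact: (Lfun1_integrable _ _).1 (Lfun2_mul_Lfun1 U2 V2).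
have -> : ('E_P[U * V] = \int[distribution P UV]_z f z)%E.
  by rewrite unlock integral_pushforward.
have -> : ('E_P[U] = \int[muU]_x x%:E)%E by rewrite unlock integral_pushforward.
have -> : ('E_P[V] = \int[muV]_y y%:E)%E by rewrite unlock integral_pushforward.
rewrite (eq_measure_integral (muU \x muV)%E) => [|A mA _]; last exact: law_prod.
apply: integral_prod_mul.
- exact: (integrable_pushforward mU (@EFin_measurable _ setT) iU measurableT).
- exact: (integrable_pushforward mV (@EFin_measurable _ setT) iV measurableT).
have /integrableP[_ fin] := integrable_pushforward mUV mf iUV measurableT.
apply/integrableP; split => //.
by rewrite (eq_measure_integral (distribution P UV)) // => A mA _; exact/esym/law_prod.
Qed.

Lemma rcov_indep0 (U V : T -> R) : U \in Lfun P 2%:E -> V \in Lfun P 2%:E ->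
  (forall A B : set R, measurable A -> measurable B ->
     P (U @^-1` A `&` V @^-1` B) = (P (U @^-1` A) * P (V @^-1` B))%E) ->
  rcov U V = 0.
Proof.
move=> U2 V2 indep; have U1 := Lfun2_Lfun1 U2; have V1 := Lfun2_Lfun1 V2.
rewrite /rcov covarianceE ?Lfun2_mul_Lfun1 // expectationM_indep //.
by rewrite subee ?fin_numM ?expectation_fin_num.
Qed.

End real_covariance.

Section sfBm_processes.
Context {d} {T : measurableType d} {R : realType} (P : probability T R).

Lemma sfBm_Lfun2 {K} {X : R -> T -> R} {u} : is_sfBm P K X -> 0 <= u ->
  X u \in Lfun P 2%:E.
Proof. by case=> _ [_ [X2 _]]; exact: X2. Qed.

Lemma sfBm_rcov {K} {X : R -> T -> R} {u v} : is_sfBm P K X -> 0 <= u -> 0 <= v ->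
  rcov P (X u) (X v) = sfBm_cov K u v.
Proof.
move=> sfX u0 v0; have [_ [_ [_ covX]]] := sfX.
by apply: EFin_inj; rewrite -covX // rcovE // (sfBm_Lfun2 sfX).
Qed.

Lemma sfBm_cov_psd3 {K} {X : R -> T -> R} : is_sfBm P K X -> psd3 (sfBm_cov K).
Proof.
move=> sfX u1 u2 u3 c1 c2 c3 u10 u20 u30.
have Y1 := Lfun_scale c1 (ler1n R 2) (sfBm_Lfun2 sfX u10).
have Y2 := Lfun_scale c2 (ler1n R 2) (sfBm_Lfun2 sfX u20).
have Y3 := Lfun_scale c3 (ler1n R 2) (sfBm_Lfun2 sfX u30).
apply: le_trans (rcov_ge0 P ((c1 \o* X u1) \+ (c2 \o* X u2) \+ (c3 \o* X u3))) _.
have Y12 := Lfun2D P Y1 Y2; have Y123 := Lfun2D P Y12 Y3.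
rewrite !rcovDl // !rcovDr //.
rewrite !rcovZl ?(sfBm_Lfun2 sfX) // !rcovZr ?(sfBm_Lfun2 sfX) // !(sfBm_rcov sfX) //.
rewrite (sfBm_covC K u2 u1) (sfBm_covC K u3 u1) (sfBm_covC K u3 u2).
set a := sfBm_cov K u1 u1; set b := sfBm_cov K u2 u2; set c := sfBm_cov K u3 u3.
set e := sfBm_cov K u1 u2; set f := sfBm_cov K u1 u3; set g := sfBm_cov K u2 u3.
by rewrite le_eqVlt; apply/orP; left; apply/eqP; ring.
Qed.

Lemma indep_processes_pair N (xi : 'I_N -> R -> T -> R) i j u v :
  indep_processes P xi -> i != j -> 0 <= u -> 0 <= v ->
  forall A B : set R, measurable A -> measurable B ->
  P (xi i u @^-1` A `&` xi j v @^-1` B) = (P (xi i u @^-1` A) * P (xi j v @^-1` B))%E.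
Proof.
move=> indep ij u0 v0 A B mA mB.
pose ts (k : 'I_N) (_ : 'I_1) := if k == i then u else if k == j then v else 0.
pose Bs (k : 'I_N) (_ : 'I_1) := if k == i then A else if k == j then B else setT.
have ts0 k m : 0 <= ts k m by rewrite /ts; case: ifP => // _; case: ifP.
have mBs k m : measurable (Bs k m) by rewrite /Bs; case: ifP => // _; case: ifP.
have ji : (j == i) = false by apply/negbTE; rewrite eq_sym.
have cap1 k : \bigcap_(m in [set: 'I_1]) (xi k (ts k m) @^-1` Bs k m)
    = xi k (ts k ord0) @^-1` Bs k ord0.
  by apply/seteqP; split => w /= => [/(_ ord0 I)|h m _]; rewrite ?(ord1 m).
have := indep 1%N ts Bs ts0 mBs.
have -> : \bigcap_(k in [set: 'I_N]) \bigcap_(m in [set: 'I_1])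
    (xi k (ts k m) @^-1` Bs k m) = xi i u @^-1` A `&` xi j v @^-1` B.
  apply/seteqP; split => w /=.
  - move=> h; split.
    + by have := h i I ord0 I; rewrite /ts /Bs eqxx.
    + by have := h j I ord0 I; rewrite /ts /Bs ji eqxx.
  - move=> [hA hB] k _ m _; rewrite /ts /Bs.
    by case: ifP => [/eqP -> //|_]; case: ifP => [/eqP -> //|_].
move=> ->; under eq_bigr do rewrite cap1.
rewrite (bigD1 i) // (bigD1 j) 1?eq_sym //= big1 ?mule1.
  by rewrite /ts /Bs eqxx ji eqxx.
move=> k /andP[ki kj].
by rewrite /ts /Bs (negbTE ki) (negbTE kj) preimage_setT probability_setT.
Qed.

Lemma indep_processes_rcov0 {N} {H : 'I_N -> R} {xi : 'I_N -> R -> T -> R} {i j u v} :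
  (forall k, is_sfBm P (H k) (xi k)) -> indep_processes P xi -> i != j ->
  0 <= u -> 0 <= v -> rcov P (xi i u) (xi j v) = 0.
Proof.
move=> sfxi indep ij u0 v0.
apply: rcov_indep0; [exact: sfBm_Lfun2 (sfxi i) u0 | exact: sfBm_Lfun2 (sfxi j) v0 |].
exact: indep_processes_pair.
Qed.

Lemma msfBm_incr_sqr_ge {N} {H a : 'I_N -> R} {xi : 'I_N -> R -> T -> R} i0 {s t} b :
  (forall i, is_sfBm P (H i) (xi i)) -> indep_processes P xi -> 0 <= s -> 0 <= t ->
  ((a i0 ^+ 2 * (sfBm_cov (H i0) t t - 2 * b * sfBm_cov (H i0) t s
                 + b ^+ 2 * sfBm_cov (H i0) s s))%:E
    <= 'E_P[(fun w => (msfBm a xi t w - b * msfBm a xi s w) ^+ 2)%R])%E.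
Proof.
move=> sfxi indep s0 t0.
pose Y i := xi i t \+ (- b) \o* xi i s.
have Y2 i : Y i \in Lfun P 2%:E.
  by apply: Lfun2D; rewrite ?Lfun_scale ?ler1n // (sfBm_Lfun2 (sfxi i)).
pose F i := a i \o* Y i.
have F2 i : F i \in Lfun P 2%:E by apply: Lfun_scale; rewrite ?ler1n.
have FY i j : rcov P (F i) (F j) = a i * a j * rcov P (Y i) (Y j).
  by rewrite rcovZl ?rcovZr ?mulrA.
have uncor i : i != i0 -> rcov P (F i0) (F i) = 0.
  move=> ii0; have i0i : i0 != i by rewrite eq_sym.
  rewrite FY rcovDZ ?(sfBm_Lfun2 (sfxi _)) // !(indep_processes_rcov0 sfxi indep i0i) //.
  ring.
have -> : (fun w => (msfBm a xi t w - b * msfBm a xi s w) ^+ 2) = (fun w => (\sum_i F i) w ^+ 2).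
  apply/funext => w; rewrite /msfBm fct_sumE mulr_sumr -sumrB.
  by congr (_ ^+ 2); apply: eq_bigr => i _; rewrite /F /Y /=; ring.
have W2 : \sum_i F i \in Lfun P 2%:E by rewrite rpred_sum ?lee1n.
apply: le_trans (rcov_le_expectation_sqr P W2).
rewrite lee_fin; apply: le_trans (rcov_sum_uncorrelated_ge P F2 uncor).
rewrite FY rcovDZ ?(sfBm_Lfun2 (sfxi _)) // !(sfBm_rcov (sfxi i0)) // (sfBm_covC _ s t).
by rewrite -expr2 le_eqVlt; apply/orP; left; apply/eqP; ring.
Qed.

End sfBm_processes.

Theorem lemma17 (R : realType) (d : measure_display) (Omega : measurableType d)
  (P : probability Omega R) (N : nat) (H : 'I_N -> R) (a : 'I_N -> R)
  (xi : 'I_N -> R -> Omega -> R) (i0 : 'I_N) (eps T : R) :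
  (0 < N)%N ->
  (forall i, 0 < H i < 1) ->
  (exists i, a i != 0) ->
  (forall i, is_sfBm P (H i) (xi i)) ->
  indep_processes P xi ->
  a i0 != 0 -> (forall i, a i != 0 -> H i0 <= H i) ->
  0 < eps -> eps < T ->
  exists c : R, 0 < c /\
    forall s t : R, s \in `[eps, T] -> t \in `[eps, T] ->
      ((c * `|s - t| `^ (2 * H i0))%:E
        <= cond_var P (msfBm a xi t) (msfBm a xi s))%E.
Proof.
move=> _ H01 _ sfxi indep a0 _ eps0 _.
have [c c0 lower] := sfBm_incr_var_lower (H i0) eps T (H01 i0) (sfBm_cov_psd3 P (sfxi i0)) eps0.
exists (a i0 ^+ 2 * c); split; first by rewrite mulr_gt0 // exprn_even_gt0.
move=> s t hs ht; apply: le_ereal_inf_tmp => _ [b _ <-].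
have [s0 t0] : 0 <= s /\ 0 <= t by move: hs ht; rewrite !in_itv /= => /andP[? _] /andP[? _]; lra.
apply: le_trans (msfBm_incr_sqr_ge P i0 b sfxi indep s0 t0).
by rewrite lee_fin -mulrA ler_wpM2l ?sqr_ge0 // lower.
Qed.
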